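(* Let $y_1\sim\mathcal N(\mu_1,1)$ and $y_2\sim\mathcal N(\mu_2,1)$ be independent, $\hat\gamma=\arg\max_{\gamma\in\{1,2\}}y_\gamma$, and fix $\alpha\in(0,1)$, $\nu\in(0,\alpha)$. Define $\widehat\Gamma^+_\nu=\{1,2\}$ if $|y_2-y_1|\le2\sqrt2\,q^\nu(1)$ and $\widehat\Gamma^+_\nu=\{\hat\gamma\}$ otherwise. Then $$P\left\{\mu_{\hat\gamma}\in\left(y_{\hat\gamma}\pm q^{\alpha-\nu}(|\widehat\Gamma^+_\nu|)\right)\right\}\ge1-\alpha.$$
   Context: For $k\in\{1,2\}$ and $\beta\in(0,1)$, $q^\beta(k)$ denotes the $1-\beta$ quantile of $\max_{i\in[k]}|Z_i|$ with $Z_1,\dots,Z_k$ i.i.d. $\mathcal N(0,1)$. *)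

From HB Require Import structures.
From mathcomp Require Import all_boot all_order all_algebra.
From mathcomp Require Import all_classical all_reals all_analysis.
Set Implicit Arguments. Unset Strict Implicit. Unset Printing Implicit Defensive.
Import Order.TTheory GRing.Theory Num.Theory.
Local Open Scope classical_set_scope.
Local Open Scope ring_scope.

Definition std_normal2 {R : realType} : set (R * R) -> \bar R :=
  (normal_prob 0 1 \x normal_prob 0 1)%E.

(* CDF of max_{i in [k]} |Z_i| for k = 1, 2 (k = 1 for every k other than 2
   is never used by the statement; only k \in {1,2} is meaningful). *)
Definition maxabs_cdf {R : realType} (k : nat) (t : R) : \bar R :=
  if k == 2%N then std_normal2 [set z : R * R | Num.max `|z.1| `|z.2| <= t]
  else normal_prob 0 1 [set z : R | `|z| <= t].

(* q^beta(k): the (1 - beta) quantile of max_{i in [k]} |Z_i|,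
   the usual (generalized-inverse) quantile  inf { t | F_k(t) >= 1 - beta }. *)
Definition q {R : realType} (beta : R) (k : nat) : R :=
  inf [set t : R | ((1 - beta)%:E <= maxabs_cdf k t)%E].

(* hat gamma = argmax_{gamma in {1,2}} y_gamma (ties broken towards 1). *)
Definition gamma_hat {R : realType} (y : R * R) : nat :=
  if y.2 <= y.1 then 1%N else 2%N.

Definition y_of {R : realType} (y : R * R) (g : nat) : R :=
  if g == 1%N then y.1 else y.2.

Definition mu_of {R : realType} (m1 m2 : R) (g : nat) : R :=
  if g == 1%N then m1 else m2.

Definition card_Gamma_plus {R : realType} (nu : R) (y : R * R) : nat :=
  if `|y.2 - y.1| <= 2 * Num.sqrt 2 * q nu 1 then 2%N else 1%N.

Definition coverage_event {R : realType} (m1 m2 alpha nu : R) : set (R * R) :=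
  [set y | `|mu_of m1 m2 (gamma_hat y) - y_of y (gamma_hat y)|
             <= q (alpha - nu) (card_Gamma_plus nu y)].

From HB Require Import structures.
From mathcomp Require Import all_boot all_order all_algebra.
From mathcomp Require Import all_classical all_reals all_analysis.
From mathcomp Require Import measurable_realfun ring lra.
Import Order.TTheory GRing.Theory Num.Theory.
Local Open Scope classical_set_scope.
Local Open Scope ring_scope.

(* Write F_k for the cdf of max_{i<=k} |Z_i|, b = alpha - nu and t = q^b(1).
   1. F_2 = F_1^2 <= F_1, hence q^b(1) <= q^b(2).  As |Gamma^+_nu| is 1 or 2,
      the coverage event contains the fixed-radius event
      E(t) = { |mu_ghat - y_ghat| <= t }.
   2. The map (y1, y2) |-> (c - y2, c - y1) with c = mu1 + mu2 preserves the
      law N(mu1,1) (x) N(mu2,1), preserves which coordinate is the larger one,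
      and turns |mu1 - y1| into |mu2 - y2|.  Hence
      P(E(t)) = P(|mu2 - y2| <= t) = F_1(t): selecting the larger coordinate
      costs no coverage at a fixed radius.
   3. F_1(q^b(1)) >= 1 - b by right-continuity of the cdf, so the coverage
      probability is at least 1 - (alpha - nu) >= 1 - alpha. *)

Lemma measurable_le_set d (T : measurableType d) (R : realType) (f g : T -> R) :
  measurable_fun setT f -> measurable_fun setT g -> measurable [set x | f x <= g x].
Proof. by move=> mf mg; have := measurable_fun_le measurableT mf mg; rewrite setTI. Qed.

Lemma measurable_dist_le {d} {T : measurableType d} {R : realType} (m t : R) [f : T -> R] :
  measurable_fun setT f -> measurable [set x | `|m - f x| <= t].
Proof.
move=> mf; apply: measurable_le_set; last exact: measurable_cst.
apply: measurableT_comp; first exact: normr_measurable.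
by apply: measurable_funB => //; exact: measurable_cst.
Qed.

Lemma measurable_if d (T : measurableType d) (P : T -> bool) (A B : set T) :
  measurable [set y | P y] -> measurable A -> measurable B ->
  measurable [set y | if P y then A y else B y].
Proof.
move=> mP mA mB.
rewrite (_ : [set y | _] = ([set y | P y] `&` A) `|` (~` [set y | P y] `&` B)).
  by apply: measurableU; apply: measurableI => //; exact: measurableC.
apply/seteqP; split => y /=; case: (P y) => /=;
  [by left | by right | by case=> -[] | by case=> -[]].
Qed.

Section mirror.
Context {R : realType}.

Definition mirror (c : R) (x : R) : R := c - x.

Lemma measurable_mirror (c : R) : measurable_fun setT (mirror c).
Proof. exact: measurable_funB. Qed.

Lemma mirror_itv (c a b : R) :
  mirror c @^-1` `]a, b]%classic = `[c - b, c - a[%classic.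
Proof.
by apply/seteqP; split => x /=; rewrite !in_itv /= /mirror => /andP[? ?];
  apply/andP; split; lra.
Qed.

(* Lebesgue measure is invariant under point reflections: both sides agree on
   the half-open intervals generating the Borel sets. *)
Lemma lebesgue_measure_mirror (c : R) (A : set R) : measurable A ->
  lebesgue_measure (mirror c @^-1` A) = lebesgue_measure A.
Proof.
move=> mA; symmetry.
have := @lebesgue_measure_unique R
  (@pushforward _ _ (measurableTypeR R) (measurableTypeR R) R lebesgue_measure (mirror c))
  _ A mA.
apply; first exact: measurable_mirror.
move=> mf _ [[a b] _ <-].
rewrite -[RHS]/(lebesgue_measure (mirror c @^-1` `]a, b])) mirror_itv.
rewrite !lebesgue_measure_itv /= !lte_fin ltrD2l ltrN2.
by case: ifP => // _; rewrite -!EFinD; congr (_%:E); lra.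
Qed.

Lemma normal_prob_mirror (m1 m2 s : R) (B : set R) : s != 0 -> measurable B ->
  normal_prob m1 s (mirror (m1 + m2) @^-1` B) = normal_prob m2 s B.
Proof.
move=> s0 mB; rewrite /normal_prob.
transitivity (\int[@pushforward _ _ (measurableTypeR R) (measurableTypeR R) R
                 lebesgue_measure (mirror (m1 + m2))]_(x in B) (normal_pdf m2 s x)%:E)%E;
  last first.
  apply: eq_measure_integral; first exact: measurable_mirror.
  move=> mf A mA _; exact: lebesgue_measure_mirror.
rewrite ge0_integral_pushforward; first last.
- by move=> x _; rewrite lee_fin normal_pdf_ge0.
- by apply/measurable_EFinP; apply: measurable_funTS; exact: measurable_normal_pdf.
- exact: mB.
- exact: measurable_mirror.
apply: eq_integral => x _; rewrite !normal_pdfE // /normal_fun /mirror.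
by congr (_ * expR _)%:E; congr (- _ / _); ring.
Qed.

Definition mirror_swap (c : R) (y : R * R) : R * R := (mirror c y.2, mirror c y.1).

Lemma measurable_reflect_swap (c : R) : measurable_fun setT (mirror_swap c).
Proof.
apply: measurable_fun_pair.
- by apply: measurable_funB => //; exact: measurable_snd.
- by apply: measurable_funB => //; exact: measurable_fst.
Qed.

(* For c = m1 + m2, mirror_swap c preserves N(m1, s^2) (x) N(m2, s^2): it suffices
   to check rectangles, where it is normal_prob_mirror applied to each factor. *)
Lemma normal2_mirror_swap (m1 m2 s : R) (A : set (R * R)) : s != 0 -> measurable A ->
  (normal_prob m1 s \x normal_prob m2 s)%E (mirror_swap (m1 + m2) @^-1` A) =
  (normal_prob m1 s \x normal_prob m2 s)%E A.
Proof.
move=> s0 mA; symmetry.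
apply: (@product_measure_unique _ _ _ _ R (normal_prob m1 s) (normal_prob m2 s)
  (@pushforward _ _ (measurableTypeR R * measurableTypeR R)%type
     (measurableTypeR R * measurableTypeR R)%type R
     (normal_prob m1 s \x normal_prob m2 s)%E (mirror_swap (m1 + m2))) _ A mA).
  exact: measurable_reflect_swap.
move=> mf A1 A2 mA1 mA2.
rewrite -[LHS]/((normal_prob m1 s \x normal_prob m2 s)%E
                  (mirror_swap (m1 + m2) @^-1` (A1 `*` A2))).
have -> : mirror_swap (m1 + m2) @^-1` (A1 `*` A2) =
    (mirror (m1 + m2) @^-1` A2) `*` (mirror (m1 + m2) @^-1` A1).
  by apply/seteqP; split => -[x y] [].
rewrite product_measure1E; last 2 first.
- by rewrite -[X in measurable X]setTI; exact: measurable_mirror.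
- by rewrite -[X in measurable X]setTI; exact: measurable_mirror.
have reflA2 := normal_prob_mirror m1 m2 s A2 s0 mA2.
have reflA1 := normal_prob_mirror m2 m1 s A1 s0 mA1; rewrite addrC in reflA1.
by rewrite /= reflA2 reflA1 muleC.
Qed.

End mirror.

Section maxabs_quantile.
Context {R : realType}.
Local Open Scope ereal_scope.

Definition absR (x : measurableTypeR R) : R := `|x|%R.
HB.instance Definition _ :=
  isMeasurableFun.Build _ _ (measurableTypeR R) R absR (@normr_measurable R setT).
Definition abs_std_normal : {RV (normal_prob (0:R) 1) >-> R} := absR.

Lemma maxabs_cdf1E (t : R) : maxabs_cdf 1 t = cdf abs_std_normal t.
Proof.
rewrite /maxabs_cdf /cdf /distribution /pushforward /=.
by congr (_ _); apply/seteqP; split => z /=; rewrite in_itv.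
Qed.

(* max(|Z_1|, |Z_2|) <= t is the rectangle {|z| <= t}^2, hence F_2 = F_1^2. *)
Lemma maxabs_cdf2E (t : R) : maxabs_cdf 2 t = maxabs_cdf 1 t * maxabs_cdf 1 t.
Proof.
rewrite /maxabs_cdf /= /std_normal2.
rewrite (_ : [set z : R * R | _] =
             [set z : R | (`|z| <= t)%R] `*` [set z : R | (`|z| <= t)%R]).
  by rewrite product_measure1E //; apply: measurable_le_set.
by apply/seteqP; split => -[a b] /=; rewrite ge_max => /andP.
Qed.

Lemma maxabs_cdf2_le1 (t : R) : maxabs_cdf 2 t <= maxabs_cdf 1 t.
Proof.
rewrite maxabs_cdf2E maxabs_cdf1E -[leRHS]mule1.
by apply: lee_wpmul2l => //; exact: cdf_le1.
Qed.

Lemma maxabs_cdf1_neg (t : R) : (t < 0)%R -> maxabs_cdf 1 t = 0.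
Proof.
move=> t0; rewrite /maxabs_cdf /= (_ : [set z | _] = set0) ?measure0 //.
apply/seteqP; split => z //= zt.
by have := le_lt_trans (normr_ge0 z) (le_lt_trans zt t0); rewrite ltxx.
Qed.

(* F_1(t) -> 1 as t -> +oo, so every level below 1 is eventually exceeded. *)
Lemma maxabs_cdf1_unbounded (x : R) : (x < 1)%R -> exists t, x%:E <= maxabs_cdf 1 t.
Proof.
move=> x1; apply/not_existsP => below.
suff : 1 <= x%:E by rewrite lee_fin; lra.
have F1_lim := cvg_cdfy1 abs_std_normal.
rewrite -(cvg_lim _ F1_lim) //; apply: lime_le; first by apply/cvg_ex; exists 1.
near=> t; rewrite -maxabs_cdf1E.
by have /negP := below t; rewrite -ltNge => /ltW.
Unshelve. all: by end_near.
Qed.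

(* Right-continuity of F_1: a bound valid strictly to the right of t holds at t. *)
Lemma maxabs_cdf1_right_closed (t : R) (y : \bar R) :
  (forall s, (t < s)%R -> y <= maxabs_cdf 1 s) -> y <= maxabs_cdf 1 t.
Proof.
move=> right_bound; have rc := @cdf_right_continuous _ _ _ _ abs_std_normal t.
rewrite maxabs_cdf1E -(cvg_lim _ rc) //.
apply: lime_ge; first by apply/cvg_ex; eexists; exact: rc.
near=> s; rewrite -maxabs_cdf1E; apply: right_bound.
by near: s; exact: nbhs_right_gt.
Unshelve. all: by end_near.
Qed.

(* Below 0 the cdf vanishes, so the level set defining q^b(1) is bounded below. *)
Lemma quantile1_set_lbound (b : R) : (b < 1)%R ->
  lbound [set t : R | (1 - b)%:E <= maxabs_cdf 1 t] 0%R.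
Proof.
move=> b1 t /= Ft; rewrite leNgt; apply/negP => t0.
by move: Ft; rewrite maxabs_cdf1_neg // lee_fin; lra.
Qed.

Lemma quantile1_spec (b : R) : (0 < b)%R -> (1 - b)%:E <= maxabs_cdf 1 (q b 1).
Proof.
move=> b0; apply: maxabs_cdf1_right_closed => s qs.
have [|t Ft ts] := inf_lt _ qs.
  by apply: maxabs_cdf1_unbounded; lra.
by apply: (le_trans Ft); rewrite !maxabs_cdf1E; apply: cdf_nondecreasing; exact: ltW.
Qed.

(* F_2 <= F_1, hence q^b(1) <= q^b(2). *)
Lemma quantile1_le2 (b : R) : (0 < b)%R -> (b < 1)%R -> (q b 1 <= q b 2)%R.
Proof.
move=> b0 b1; apply: lb_le_inf.
- have /maxabs_cdf1_unbounded [t Ft] : (1 - b / 2 < 1)%R by lra.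
  exists t => /=; rewrite maxabs_cdf2E.
  by apply: le_trans (lee_pmul _ _ Ft Ft); rewrite -?EFinM lee_fin; nra.
- move=> s /= F2s; apply: ge_inf; first by exists 0%R; exact: quantile1_set_lbound.
  exact: le_trans F2s (maxabs_cdf2_le1 s).
Qed.

End maxabs_quantile.

Section coverage.
Context {R : realType}.
Variables mu1 mu2 : R.
Local Notation P := (normal_prob mu1 1 \x normal_prob mu2 1)%E.

Definition fixed_radius_event (t : R) : set (R * R) :=
  [set y | `|mu_of mu1 mu2 (gamma_hat y) - y_of y (gamma_hat y)| <= t].

Lemma fixed_radius_eventE (t : R) : fixed_radius_event t =
  [set y | if y.2 <= y.1 then (`|mu1 - y.1| <= t : Prop) else `|mu2 - y.2| <= t].
Proof. by apply/seteqP; split => y; rewrite /fixed_radius_event /gamma_hat /=; case: ifP. Qed.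

Lemma measurable_fixed_radius_event (t : R) : measurable (fixed_radius_event t).
Proof.
rewrite fixed_radius_eventE; apply: measurable_if.
- by apply: measurable_le_set; [exact: measurable_snd | exact: measurable_fst].
- exact: measurable_dist_le _ _ measurable_fst.
- exact: measurable_dist_le _ _ measurable_snd.
Qed.

Lemma coverage_eventE (alpha nu : R) : coverage_event mu1 mu2 alpha nu =
  [set y | if `|y.2 - y.1| <= 2 * Num.sqrt 2 * q nu 1
           then fixed_radius_event (q (alpha - nu) 2) y
           else fixed_radius_event (q (alpha - nu) 1) y].
Proof. by apply/seteqP; split => y; rewrite /coverage_event /card_Gamma_plus /=; case: ifP. Qed.

Lemma measurable_coverage_event (alpha nu : R) :
  measurable (coverage_event mu1 mu2 alpha nu).
Proof.
rewrite coverage_eventE; apply: measurable_if; try exact: measurable_fixed_radius_event.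
apply: measurable_le_set => //; apply: measurableT_comp => //.
by apply: measurable_funB; [exact: measurable_snd | exact: measurable_fst].
Qed.

Lemma fixed_radius_sub_coverage (alpha nu : R) :
  q (alpha - nu) 1 <= q (alpha - nu) 2 ->
  fixed_radius_event (q (alpha - nu) 1) `<=` coverage_event mu1 mu2 alpha nu.
Proof. by move=> q12 y; rewrite coverage_eventE /=; case: ifP => // _ /le_trans; apply. Qed.

Lemma normal_prob_dist_le (m t : R) :
  normal_prob m 1 [set x | `|m - x| <= t] = maxabs_cdf 1 t.
Proof.
rewrite -(normal_prob_mirror 0 m) //; last first.
  exact: (measurable_dist_le m t (@measurable_id _ R setT)).
congr normal_prob; apply/seteqP; split => z /=;
  by rewrite /mirror add0r opprB addrC subrK.
Qed.

(* The key symmetry: mirror_swap (mu1 + mu2) keeps the order of y1, y2 and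
   exchanges |mu1 - y1| with |mu2 - y2|, so selecting the larger coordinate
   costs nothing and the fixed-radius event has probability F_1(t). *)
Lemma prob_fixed_radius_event (t : R) : P (fixed_radius_event t) = maxabs_cdf 1 t.
Proof.
pose E1 := [set y : R * R | y.2 <= y.1 /\ `|mu1 - y.1| <= t].
pose E1' := [set y : R * R | y.2 <= y.1 /\ `|mu2 - y.2| <= t].
pose E2 := [set y : R * R | ~ (y.2 <= y.1) /\ `|mu2 - y.2| <= t].
have mle : measurable [set y : R * R | y.2 <= y.1].
  by apply: measurable_le_set; [exact: measurable_snd | exact: measurable_fst].
have mE1' : measurable E1'.
  by apply: measurableI => //; exact: measurable_dist_le _ _ measurable_snd.
have mE2 : measurable E2.
  by apply: measurableI; [exact: measurableC | exact: measurable_dist_le _ _ measurable_snd].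
have E1E : E1 = mirror_swap (mu1 + mu2) @^-1` E1'.
  apply/seteqP; split => -[y1 y2]; rewrite /E1 /E1' /mirror_swap /mirror /=;
  by rewrite lerD2l lerN2 (_ : mu2 - (mu1 + mu2 - y1) = - (mu1 - y1)) ?normrN //; ring.
have E1'E2 : E1' `|` E2 = setT `*` [set x | `|mu2 - x| <= t].
  apply/seteqP; split => -[y1 y2] /=; first by case=> -[].
  by move=> [_ dist]; case: (boolP (y2 <= y1)) => [le21|/negP gt21]; [left | right].
have -> : fixed_radius_event t = E1 `|` E2.
  rewrite fixed_radius_eventE; apply/seteqP; split => y /=.
    by case: ifP => le21 dist; [left | right; split => //; rewrite le21].
  by case=> -[le21 dist]; rewrite ?le21 //; move/negP: le21 => /negbTE ->.
have mE1 : measurable E1.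
  by rewrite E1E -[X in measurable X]setTI; exact: measurable_reflect_swap.
have disjoint1 : E1 `&` E2 = set0 by apply/seteqP; split => y // [[? _] [? _]].
have disjoint1' : E1' `&` E2 = set0 by apply/seteqP; split => y // [[? _] [? _]].
have PE1 : P E1 = P E1'.
  by rewrite E1E; exact: normal2_mirror_swap.
have PU : P (E1 `|` E2) = (P E1 + P E2)%E by exact: measureU.
have PU' : P (E1' `|` E2) = (P E1' + P E2)%E by exact: measureU.
rewrite PU PE1 -PU'.
rewrite E1'E2 (product_measure1E (normal_prob mu1 1) (normal_prob mu2 1) measurableT
  (measurable_dist_le mu2 t (@measurable_id _ R setT))).
by rewrite [X in (X * _)%E]probability_setT mul1e; exact: normal_prob_dist_le.
Qed.

End coverage.

Theorem mainTheorem9 (R : realType) (mu1 mu2 alpha nu : R) :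
  0 < alpha -> alpha < 1 -> 0 < nu -> nu < alpha ->
  ((1 - alpha)%:E <=
     (normal_prob mu1 1 \x normal_prob mu2 1) (coverage_event mu1 mu2 alpha nu))%E.
Proof.
move=> alpha0 alpha1 nu0 nu_alpha.
have b0 : 0 < alpha - nu by lra.
have b1 : alpha - nu < 1 by lra.
have cover := fixed_radius_sub_coverage mu1 mu2 alpha nu (quantile1_le2 (alpha - nu) b0 b1).
have := @le_measure _ R _ (normal_prob mu1 1 \x normal_prob mu2 1)%E
  (fixed_radius_event mu1 mu2 (q (alpha - nu) 1)) (coverage_event mu1 mu2 alpha nu).
rewrite !inE => /(_ (measurable_fixed_radius_event _ _ _)
                   (measurable_coverage_event _ _ _ _) cover) P_cover.
apply: le_trans P_cover; rewrite [X in (_ <= X)%E]prob_fixed_radius_event.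
by apply: le_trans (quantile1_spec (alpha - nu) b0); rewrite lee_fin; lra.
Qed.
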